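(* Under the hypotheses of the continuity-in-pretrained-model result (Assumption 1, the uniform Lipschitz condition $\|T^Y_0(x_1,y_1)-T^Y_0(x_2,y_2)\|_{\mathcal{Y}_T}\le L(\|x_1-x_2\|_{\mathcal{X}_T}+\|y_1-y_2\|_{\mathcal{Y}_S})$ for all $T^Y_0\in\mathbb{T}^Y_0$, and the bound $|\mathcal{E}^O(h_1)-\mathcal{E}^O(h_2)|\le L'\mathcal{W}_p(h_1\#Law(X_T),h_2\#Law(X_T))^p$ for all intermediate models $h_1,h_2$, for some $L'>0,p\ge1$), the transfer risk $S\mapsto\mathcal{C}(S)$ is continuous on the metric space $(\mathcal{S},d_S)$, where $d_S((\mu_1,f_1),(\mu_2,f_2))=D(\mu_1,\mu_2)+d_M(f_1,f_2)$.
   Context: Transfer learning framework. A source task $S$ consists of an input space $\mathcal{X}_S$ and output space $\mathcal{Y}_S$ (finite-dimensional normed spaces), a random pair $(X_S,Y_S)$, a set $A_S$ of admissible models $f:\mathcal{X}_S\to\mathcal{Y}_S$ and a pretrained model $f_S^*\in A_S$. A target task $T$ has analogous $\mathcal{X}_T,\mathcal{Y}_T,(X_T,Y_T),A_T$ and optimal target model $f_T^*$. Fixed sets $\mathbb{T}^X_0$ of maps $\mathcal{X}_T\to\mathcal{X}_S$ and $\mathbb{T}^Y_0$ of maps $\mathcal{X}_T\times\mathcal{Y}_S\to\mathcal{Y}_T$ are given. For $(T^X_0,T^Y_0)$ the intermediate model is $f_{ST}(x)=T^Y_0(x,f_S^*(T^X_0(x)))$; $\mathbb{P}_T=Law(f_T^*(X_T))$,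 $\mathbb{P}_{ST}=Law(f_{ST}(X_T))$. An output transport risk is $\mathcal{E}^O:A_T\to\mathbb{R}$ with $\mathcal{E}^O\ge0$ and $\mathcal{E}^O(f_{ST})=0$ iff $\mathbb{P}_{ST}=\mathbb{P}_T$. An input transport risk $\mathcal{E}^I$ satisfies $\mathcal{E}^I(T^X_0)\ge0$, with equality iff $T^X_0\#Law(X_T)=Law(X_S)$. The model-specific transfer risk is $\mathcal{C}(S,T\mid f_{ST})=C(\mathcal{E}^O(f_{ST}),\mathcal{E}^I(T^X_0))$, with $C:\mathbb{R}^2\to\mathbb{R}$, $C(0,0)=0$, $C\ge0$ on relevant values, non-decreasing in each argument, and $|C(a,b)-C(a',b')|\le L_C(|a-a'|+|b-b'|)$ for some $L_C>0$. The transfer risk is $\mathcal{C}(S,T)=\inf_{(T^X_0,T^Y_0)\in\mathbb{T}^X_0\times\mathbb{T}^Y_0}\mathcal{C}(S,T\mid f_{ST})$. With target and transport sets fixed, a source task is $S=(\mu,f)\in\mathcal{S}\subset\mathcal{P}(\mathcal{X}_S)\times A_S$ ($\mu=Law(X_S)$, $f=f_S^*$) and $\mathcal{C}(S)=\mathcal{C}(\mu,f):=\mathcal{C}(S,T)$. Assumption 1: $D$ is a metric on $\mathcal{P}(\mathcal{X}_S)$ and $\mathcal{E}^I(T^X_0)=D(T^X_0\#Law(X_T),\mu)$. For a fixed constant $M>0$, $d_M(f_1,f_2):=\min\{M,\sup_{x\in\mathcal{X}_S}\|f_1(x)-f_2(x)\|_{\mathcal{Y}_S}\}$. $\mathcal{W}_p$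 is the $p$-Wasserstein distance on probability measures on $\mathcal{Y}_T$. *)

From HB Require Import structures.
From mathcomp Require Import all_boot all_order all_algebra.
From mathcomp Require Import all_classical all_reals all_analysis.
Set Implicit Arguments.
Unset Strict Implicit.
Unset Printing Implicit Defensive.
Import Order.TTheory GRing.Theory Num.Theory.
Import numFieldNormedType.Exports.
Local Open Scope classical_set_scope.
Local Open Scope ring_scope.

Section TransferDefs.
Variable R : realType.

Definition findim (V : normedModType R) : Prop :=
  exists (n : nat) (g : V -> 'rV[R]_n), linear g /\ bijective g.

Definition borelT (V : normedModType R) := g_sigma_algebraType (@open V).

Definition measfun (V : normedModType R) := set (borelT V) -> \bar R.

Definition is_prob (V : normedModType R) (m : measfun V) : Prop :=
  m set0 = 0%E /\ (forall A, measurable A -> (0 <= m A)%E) /\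
  semi_sigma_additive m /\ m setT = 1%E.

Definition push (V W : normedModType R) (P : measfun V) (h : V -> W) : measfun W :=
  @pushforward _ _ (borelT V) (borelT W) R P h.

Definition couplings (Y : normedModType R) (nu1 nu2 : measfun Y) :
  set (probability (borelT Y * borelT Y)%type R) :=
  [set pi | forall A : set (borelT Y), measurable A ->
     pi (A `*` setT) = nu1 A /\ pi (setT `*` A) = nu2 A].

Definition Wasserstein (Y : normedModType R) (p : R) (nu1 nu2 : measfun Y) : \bar R :=
  poweR (ereal_inf [set (\int[pi]_z (powR `|(z.1 : Y) - (z.2 : Y)| p)%:E)%E
                   | pi in couplings nu1 nu2]) p^-1.

Definition dM (XS YS : normedModType R) (M : R) (f1 f2 : XS -> YS) : R :=
  fine (Order.min M%:E (ereal_sup (range (fun x => (`|f1 x - f2 x|)%:E)))).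

Definition fST (XT XS YS YT : normedModType R) (f : XS -> YS) (TX : XT -> XS)
  (TY : XT * YS -> YT) : XT -> YT := fun x => TY (x, f (TX x)).

Definition transfer_risk (XT XS YS YT : normedModType R)
  (C : R -> R -> R) (EO : (XT -> YT) -> R) (D : measfun XS -> measfun XS -> R)
  (PXT : measfun XT) (TXs : set (XT -> XS)) (TYs : set (XT * YS -> YT))
  (s : measfun XS * (XS -> YS)) : R :=
  inf [set r | exists2 TX, TXs TX & exists2 TY, TYs TY &
               r = C (EO (fST s.2 TX TY)) (D (push PXT TX) s.1)].

End TransferDefs.

From HB Require Import structures.
From mathcomp Require Import all_boot all_order all_algebra.
From mathcomp Require Import all_classical all_reals all_analysis.
From mathcomp Require Import lra.
Import Order.TTheory GRing.Theory Num.Theory.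
Import numFieldNormedType.Exports.
Local Open Scope classical_set_scope.
Local Open Scope ring_scope.

(* The proof gives a local Lipschitz estimate.  Fix the transport maps
   (TX, TY).  If sup_x |f x - f' x| <= r, the uniform Lipschitz condition on
   TY shows that the two intermediate models fST f and fST f' are uniformly
   (|L| r)-close; coupling their laws through the joint map
   x |-> (fST f x, fST f' x) bounds W_p^p of the laws by (|L| r)^p, hence the
   E^O-terms differ by at most L' (|L| r)^p.  The D-terms differ by at most
   D(mu, mu') (reverse triangle inequality), so by the Lipschitz property of C
   the two risks differ by LC (L' (|L| r)^p + D(mu, mu')), uniformly in
   (TX, TY).  Uniformly close families have close infima, which transfers
   the bound to C(S) - C(S').  When d_M(f, f') < M it is the actual uniform
   distance, and once |L| d_M <= 1 the power can be dropped (p >= 1); this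
   yields |C(S) - C(S')| <= k d_S(S, S') near S, whence continuity. *)

Section GeneralFacts.
Context {R : realType}.

Lemma push_is_prob (V W : normedModType R) (P : probability (borelT V) R)
    (h : V -> W) : measurable_fun setT (h : borelT V -> borelT W) ->
  is_prob (push P h).
Proof.
move=> mh.
pose hm : {mfun borelT V >-> borelT W} :=
  HB.pack (h : borelT V -> borelT W) (isMeasurableFun.Build _ _ _ _ _ mh).
have -> : push P h = distribution P hm by [].
split; first exact: measure0.
split; first by move=> A _; exact: measure_ge0.
split; [exact: measure_semi_sigma_additive | exact: probability_setT].
Qed.

Import HBNNSimple.

(* No measurability of g is required: the integral
   is the supremum of integrals of simple functions below g. *)
Lemma integral_distribution_le (d1 d2 : measure_display) (X : measurableType d1)
    (Y : measurableType d2) (P : probability X R) (phi : {mfun X >-> Y})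
    (g : Y -> \bar R) (c : R) :
  (forall y, 0 <= g y)%E -> (forall x, g (phi x) <= c%:E)%E ->
  (\int[distribution P phi]_y g y <= c%:E)%E.
Proof.
move=> g_ge0 g_le; rewrite ge0_integralTE //.
apply: ge_ereal_sup => _ [h h_le <-]; rewrite -integralT_nnsfun.
rewrite ge0_integral_pushforward //; last 2 first.
- exact/measurable_realfun.measurable_EFinP/measurable_funP.
- by move=> y _; rewrite lee_fin.
rewrite preimage_setT; apply: (@le_trans _ _ (\int[P]_x (cst c%:E) x)%E).
  apply: ge0_le_integral => //.
  - by move=> x _; rewrite /= lee_fin.
  - exact/measurable_realfun.measurable_EFinP/measurableT_comp.
  - by move=> x _; exact: le_trans (h_le _) (g_le _).
rewrite integral_cst //.
by rewrite [X in (_ * X <= _)%E](_ : _ = 1%E) ?mule1 //; exact: probability_setT.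
Qed.

(* Laws of uniformly c-close measurable maps are at W_p-distance at most c
   (stated for W_p^p): the joint map x |-> (h1 x, h2 x) yields a coupling. *)
Lemma Wasserstein_pow_le {X Y : normedModType R} (P : probability (borelT X) R)
    {h1 h2 : X -> Y} {p c : R} :
  measurable_fun setT (h1 : borelT X -> borelT Y) ->
  measurable_fun setT (h2 : borelT X -> borelT Y) ->
  0 < p -> 0 <= c -> (forall x, `|h1 x - h2 x| <= c) ->
  (poweR (Wasserstein p (push P h1) (push P h2)) p <= (c `^ p)%:E)%E.
Proof.
move=> m1 m2 p_gt0 c_ge0 h12.
pose joint : {mfun borelT X >-> (borelT Y * borelT Y)%type} :=
  HB.pack (fun x => (h1 x, h2 x) : (borelT Y * borelT Y)%type)
    (isMeasurableFun.Build _ _ _ _ _ (measurable_fun_pair m1 m2)).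
pose pi : probability _ R := distribution P joint.
have pi_coupling : couplings (push P h1) (push P h2) pi.
  move=> A _; split; congr (P _); apply/funext => x; apply/propext;
  by rewrite /preimage /setX /=; split => [[]|].
rewrite /Wasserstein; set costs := (X in ereal_inf X).
have inf_le : (ereal_inf costs <= (c `^ p)%:E)%E.
  apply: le_trans (ereal_inf_lbound _) _; first by exists pi.
  apply: integral_distribution_le => [z|x]; first by rewrite lee_fin powR_ge0.
  rewrite lee_fin; apply: (ge0_ler_powR (ltW p_gt0)) => //.
  - by rewrite nnegrE.
  - exact: h12.
have inf_ge0 : (0 <= ereal_inf costs)%E.
  apply: le_ereal_inf_tmp => _ [q _ <-].
  by apply: integral_ge0 => z _; rewrite lee_fin powR_ge0.
by rewrite -poweRrM mulVf ?gt_eqF // poweRe1.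
Qed.

(* Two doubly indexed families of nonnegative reals that are uniformly
   K-close have K-close infima (inf of the empty set is 0 on both sides). *)
Lemma inf_dist_le (I J : Type) (P : I -> Prop) (Q : J -> Prop)
    (a b : I -> J -> R) (K : R) : 0 <= K ->
  (forall i j, P i -> Q j -> 0 <= a i j) ->
  (forall i j, P i -> Q j -> 0 <= b i j) ->
  (forall i j, P i -> Q j -> `|a i j - b i j| <= K) ->
  `|inf [set r | exists2 i, P i & exists2 j, Q j & r = a i j] -
    inf [set r | exists2 i, P i & exists2 j, Q j & r = b i j]| <= K.
Proof.
move=> K_ge0 a_ge0 b_ge0 ab_le.
set A := [set r | _]; set B := [set r | _].
have [[i Pi [j Qj]]|empty] := pselect (exists2 i, P i & exists j, Q j); last first.
  have no_index u : [set r | exists2 i, P i & exists2 j, Q j & r = u i j] = set0.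
    apply/seteqP; split => // r [i Pi [j Qj _]].
    by apply: empty; exists i => //; exists j.
  by rewrite /A /B !no_index subrr normr0.
have lbA : has_lbound A by exists 0 => _ [i' Pi' [j' Qj' ->]]; exact: a_ge0.
have lbB : has_lbound B by exists 0 => _ [i' Pi' [j' Qj' ->]]; exact: b_ge0.
have neA : A !=set0 by exists (a i j); exists i => //; exists j.
have neB : B !=set0 by exists (b i j); exists i => //; exists j.
rewrite ler_distl; apply/andP; split.
- apply: lb_le_inf => // _ [i' Pi' [j' Qj' ->]]; rewrite lerBlDr.
  apply: (@le_trans _ _ (b i' j')); first by apply: ge_inf => //; exists i' => //; exists j'.
  by have := ab_le _ _ Pi' Qj'; rewrite ler_distl lerBlDr => /andP[].
- rewrite -lerBlDr; apply: lb_le_inf => // _ [i' Pi' [j' Qj' ->]]; rewrite lerBlDr.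
  apply: (@le_trans _ _ (a i' j')); first by apply: ge_inf => //; exists i' => //; exists j'.
  by have := ab_le _ _ Pi' Qj'; rewrite ler_distl => /andP[].
Qed.

Lemma dM_ge0 {XS YS : normedModType R} {M : R} (f1 f2 : XS -> YS) :
  0 < M -> 0 <= dM M f1 f2.
Proof.
move=> M_gt0; rewrite /dM; set s := ereal_sup _.
have [Ms|sM] := leP M%:E s; first exact: ltW.
rewrite fine_ge0 //.
apply: (@le_trans _ _ (`|f1 0 - f2 0|)%:E); first by rewrite lee_fin.
by apply: ereal_sup_ubound; exists 0.
Qed.

Lemma dM_uniform_bound {XS YS : normedModType R} {M : R} {f1 f2 : XS -> YS} :
  dM M f1 f2 < M -> forall x, `|f1 x - f2 x| <= dM M f1 f2.
Proof.
rewrite /dM; set s := ereal_sup _ => + x.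
have s_ub : ((`|f1 x - f2 x|)%:E <= s)%E by apply: ereal_sup_ubound; exists x.
have [Ms|sM _] := leP M%:E s; first by rewrite ltxx.
have s_fin : s \is a fin_num.
  by rewrite ge0_fin_numE ?(lt_trans sM) ?ltry // (le_trans _ s_ub) ?lee_fin.
by rewrite -lee_fin fineK.
Qed.

Lemma measurable_fST {XT XS YS YT : normedModType R} {f : XS -> YS}
    {TX : XT -> XS} {TY : XT * YS -> YT} :
  measurable_fun setT (f : borelT XS -> borelT YS) ->
  measurable_fun setT (TX : borelT XT -> borelT XS) ->
  measurable_fun setT (TY : (borelT XT * borelT YS)%type -> borelT YT) ->
  measurable_fun setT (fST f TX TY : borelT XT -> borelT YT).
Proof.
move=> mf mX mY; apply: (measurableT_comp mY).
exact: measurable_fun_pair (@measurable_id _ (borelT XT) setT)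
                           (measurableT_comp mf mX).
Qed.

Lemma dist_diff_le (T : Type) (dist : T -> T -> R) (dom : T -> Prop) :
  (forall x y, dom x -> dom y -> dist x y = dist y x) ->
  (forall x y z, dom x -> dom y -> dom z -> dist x z <= dist x y + dist y z) ->
  forall z x y, dom z -> dom x -> dom y -> `|dist z x - dist z y| <= dist x y.
Proof.
move=> sym tri z x y dz dx dy; rewrite ler_distl; apply/andP; split.
  by rewrite lerBlDr; exact: tri.
by rewrite (sym x y) //; apply: tri.
Qed.

Lemma powR_le_self (x p : R) : 0 <= x <= 1 -> 1 <= p -> x `^ p <= x.
Proof.
case/andP=> x_ge0 x_le1 p_ge1.
have [->|x_neq0] := eqVneq x 0; first by rewrite powR0 // gt_eqF // (lt_le_trans ltr01).
by apply: ge1r_powR => //; rewrite lt_neqAle eq_sym x_neq0 x_ge0.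
Qed.

End GeneralFacts.

Section LocalLipschitz.
Context {R : realType} {XT XS YS YT : normedModType R}.
Variables (PXT : probability (borelT XT) R)
  (TXs : set (XT -> XS)) (TYs : set (XT * YS -> YT))
  (AS : set (XS -> YS)) (AT : set (XT -> YT))
  (D : measfun XS -> measfun XS -> R) (EO : (XT -> YT) -> R) (C : R -> R -> R)
  (LC L L' p : R).
Hypotheses
  (mTX : forall TX, TXs TX -> measurable_fun setT (TX : borelT XT -> borelT XS))
  (mTY : forall TY, TYs TY ->
     measurable_fun setT (TY : (borelT XT * borelT YS)%type -> borelT YT))
  (mAS : forall f, AS f -> measurable_fun setT (f : borelT XS -> borelT YS))
  (fST_AT : forall f TX TY, AS f -> TXs TX -> TYs TY -> AT (fST f TX TY))
  (D_ge0 : forall m1 m2, is_prob m1 -> is_prob m2 -> 0 <= D m1 m2)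
  (D_sym : forall m1 m2, is_prob m1 -> is_prob m2 -> D m1 m2 = D m2 m1)
  (D_tri : forall m1 m2 m3, is_prob m1 -> is_prob m2 -> is_prob m3 ->
     D m1 m3 <= D m1 m2 + D m2 m3)
  (EO_ge0 : forall h, AT h -> 0 <= EO h)
  (C_ge0 : forall a b, 0 <= a -> 0 <= b -> 0 <= C a b)
  (LC_gt0 : 0 < LC)
  (C_lip : forall a b a' b', `|C a b - C a' b'| <= LC * (`|a - a'| + `|b - b'|))
  (TY_lip : forall TY, TYs TY -> forall (x1 x2 : XT) (y1 y2 : YS),
     `|TY (x1, y1) - TY (x2, y2)| <= L * (`|x1 - x2| + `|y1 - y2|))
  (L'_gt0 : 0 < L') (p_ge1 : 1 <= p)
  (EO_W : forall f1 f2 TX1 TX2 TY1 TY2,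
     AS f1 -> AS f2 -> TXs TX1 -> TXs TX2 -> TYs TY1 -> TYs TY2 ->
     ((`|EO (fST f1 TX1 TY1) - EO (fST f2 TX2 TY2)|)%:E <=
      L'%:E * poweR (Wasserstein p (push PXT (fST f1 TX1 TY1))
                                   (push PXT (fST f2 TX2 TY2))) p)%E).

Let risk (mu : measfun XS) (f : XS -> YS) (TX : XT -> XS) (TY : XT * YS -> YT)
  : R := C (EO (fST f TX TY)) (D (push PXT TX) mu).

Let risk_ge0 (mu : measfun XS) (f : XS -> YS) (TX : XT -> XS)
    (TY : XT * YS -> YT) :
  is_prob mu -> AS f -> TXs TX -> TYs TY -> 0 <= risk mu f TX TY.
Proof.
move=> mu_prob Af TXP TYP; apply: C_ge0; first exact/EO_ge0/fST_AT.
by apply: D_ge0 => //; apply: push_is_prob; exact: mTX.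
Qed.

Lemma fST_uniform_close {f f' : XS -> YS} {TX : XT -> XS} {TY : XT * YS -> YT}
    {r : R} : TYs TY ->
  (forall x, `|f x - f' x| <= r) ->
  forall x, `|fST f TX TY x - fST f' TX TY x| <= `|L| * r.
Proof.
move=> TYP f_close x; rewrite /fST; apply: le_trans (TY_lip _ TYP _ _ _ _) _.
rewrite subrr normr0 add0r; apply: (@le_trans _ _ (`|L| * `|f (TX x) - f' (TX x)|)).
  by rewrite ler_wpM2r // ler_norm.
by rewrite ler_wpM2l.
Qed.

Lemma risk_dist_le (mu mu' : measfun XS) (f f' : XS -> YS) (TX : XT -> XS)
    (TY : XT * YS -> YT) (r : R) :
  is_prob mu -> is_prob mu' -> AS f -> AS f' -> TXs TX -> TYs TY ->
  0 <= r -> (forall x, `|f x - f' x| <= r) ->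
  `|risk mu f TX TY - risk mu' f' TX TY| <=
    LC * (L' * (`|L| * r) `^ p + D mu mu').
Proof.
move=> mu_prob mu'_prob Af Af' TXP TYP r_ge0 f_close.
apply: le_trans (C_lip _ _ _ _) _; rewrite ler_pM2l // lerD //.
  have W_le := Wasserstein_pow_le PXT (measurable_fST (mAS _ Af) (mTX _ TXP) (mTY _ TYP))
    (measurable_fST (mAS _ Af') (mTX _ TXP) (mTY _ TYP)) (lt_le_trans ltr01 p_ge1)
    (mulr_ge0 (normr_ge0 L) r_ge0) (fST_uniform_close TYP f_close).
  rewrite -lee_fin EFinM; apply: le_trans (EO_W _ _ _ _ _ _ Af Af' TXP TXP TYP TYP) _.
  by apply: lee_wpmul2l W_le; rewrite lee_fin ltW.
apply: (@dist_diff_le _ _ D (@is_prob R XS)) => //.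
by apply: push_is_prob; exact: mTX.
Qed.

Lemma transfer_risk_dist_le {mu mu' : measfun XS} {f f' : XS -> YS} {M : R} :
  0 < M -> is_prob mu -> is_prob mu' -> AS f -> AS f' -> dM M f f' < M ->
  `|transfer_risk C EO D PXT TXs TYs (mu, f) -
    transfer_risk C EO D PXT TXs TYs (mu', f')| <=
    LC * (L' * (`|L| * dM M f f') `^ p + D mu mu').
Proof.
move=> M_gt0 mu_prob mu'_prob Af Af' dM_lt.
have dM0 := dM_ge0 f f' M_gt0.
apply: inf_dist_le => [|TX TY TXP TYP|TX TY TXP TYP|TX TY TXP TYP].
- by rewrite mulr_ge0 ?(ltW LC_gt0) // addr_ge0 ?D_ge0 // mulr_ge0 ?powR_ge0 ?ltW.
- exact: risk_ge0.
- exact: risk_ge0.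
exact: risk_dist_le (dM_uniform_bound dM_lt).
Qed.

(* Local Lipschitz continuity: once |L| d_M <= 1 the exponent p >= 1 can be
   dropped, giving a bound linear in d_S = D + d_M. *)
Lemma transfer_risk_lipschitz {mu mu' : measfun XS} {f f' : XS -> YS} {M : R} :
  0 < M -> is_prob mu -> is_prob mu' -> AS f -> AS f' -> dM M f f' < M ->
  `|L| * dM M f f' <= 1 ->
  `|transfer_risk C EO D PXT TXs TYs (mu, f) -
    transfer_risk C EO D PXT TXs TYs (mu', f')| <=
    LC * (L' * `|L| + 1) * (D mu mu' + dM M f f').
Proof.
move=> M_gt0 mu_prob mu'_prob Af Af' dM_lt Ld_le1.
have dM0 := dM_ge0 f f' M_gt0; have D0 := D_ge0 _ _ mu_prob mu'_prob.
apply: le_trans (transfer_risk_dist_le M_gt0 mu_prob mu'_prob Af Af' dM_lt) _.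
have pow_le : (`|L| * dM M f f') `^ p <= `|L| * dM M f f'.
  by apply: powR_le_self p_ge1; rewrite Ld_le1 mulr_ge0.
rewrite -mulrA ler_wpM2l ?(ltW LC_gt0) //.
apply: (@le_trans _ _ (L' * (`|L| * dM M f f') + D mu mu')).
  by rewrite lerD2r ler_wpM2l // ltW.
have : 0 <= L' * `|L| * D mu mu' by rewrite !mulr_ge0 // ltW.
nra.
Qed.

End LocalLipschitz.

Theorem mainTheorem4 (R : realType) (XT XS YS YT : normedModType R)
  (fdXT : findim XT) (fdXS : findim XS) (fdYS : findim YS) (fdYT : findim YT)
  (PXT : probability (borelT XT) R)
  (TXs : set (XT -> XS)) (TYs : set (XT * YS -> YT))
  (AS : set (XS -> YS)) (AT : set (XT -> YT)) (fT : XT -> YT)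
  (Sset : set (measfun XS * (XS -> YS)))
  (D : measfun XS -> measfun XS -> R) (EO : (XT -> YT) -> R) (C : R -> R -> R)
  (LC L L' p M : R)
  (* measurability of the maps involved (so that all laws are well defined) *)
  (mTX : forall TX, TXs TX -> measurable_fun setT (TX : borelT XT -> borelT XS))
  (mTY : forall TY, TYs TY ->
     measurable_fun setT (TY : (borelT XT * borelT YS)%type -> borelT YT))
  (mAS : forall f, AS f -> measurable_fun setT (f : borelT XS -> borelT YS))
  (fT_AT : AT fT) (mfT : measurable_fun setT (fT : borelT XT -> borelT YT))
  (fST_AT : forall f TX TY, AS f -> TXs TX -> TYs TY -> AT (fST f TX TY))
  (* Assumption 1: D is a metric on P(X_S) *)
  (D_ge0 : forall m1 m2, is_prob m1 -> is_prob m2 -> 0 <= D m1 m2)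
  (D_sym : forall m1 m2, is_prob m1 -> is_prob m2 -> D m1 m2 = D m2 m1)
  (D_tri : forall m1 m2 m3, is_prob m1 -> is_prob m2 -> is_prob m3 ->
     D m1 m3 <= D m1 m2 + D m2 m3)
  (D_eq0 : forall m1 m2, is_prob m1 -> is_prob m2 ->
     (D m1 m2 = 0 <-> forall A : set (borelT XS), measurable A -> m1 A = m2 A))
  (* E^O is an output transport risk *)
  (EO_ge0 : forall h, AT h -> 0 <= EO h)
  (EO_eq0 : forall f TX TY, AS f -> TXs TX -> TYs TY ->
     (EO (fST f TX TY) = 0 <->
      forall A : set (borelT YT), measurable A ->
        push PXT (fST f TX TY) A = push PXT fT A))
  (* properties of C *)
  (C00 : C 0 0 = 0)
  (C_ge0 : forall a b, 0 <= a -> 0 <= b -> 0 <= C a b)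
  (C_mon1 : forall a a' b, a <= a' -> C a b <= C a' b)
  (C_mon2 : forall a b b', b <= b' -> C a b <= C a b')
  (LC_gt0 : 0 < LC)
  (C_lip : forall a b a' b', `|C a b - C a' b'| <= LC * (`|a - a'| + `|b - b'|))
  (* source tasks S = (mu, f) in P(X_S) x A_S *)
  (Sset_sub : forall s, Sset s -> is_prob s.1 /\ AS s.2)
  (* uniform Lipschitz condition on T^Y_0 *)
  (TY_lip : forall TY, TYs TY -> forall (x1 x2 : XT) (y1 y2 : YS),
     `|TY (x1, y1) - TY (x2, y2)| <= L * (`|x1 - x2| + `|y1 - y2|))
  (* Wasserstein bound on E^O *)
  (L'_gt0 : 0 < L') (p_ge1 : 1 <= p)
  (EO_W : forall f1 f2 TX1 TX2 TY1 TY2,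
     AS f1 -> AS f2 -> TXs TX1 -> TXs TX2 -> TYs TY1 -> TYs TY2 ->
     ((`|EO (fST f1 TX1 TY1) - EO (fST f2 TX2 TY2)|)%:E <=
      L'%:E * poweR (Wasserstein p (push PXT (fST f1 TX1 TY1))
                                   (push PXT (fST f2 TX2 TY2))) p)%E)
  (M_gt0 : 0 < M) :
  forall s, Sset s -> forall eps : R, 0 < eps ->
  exists2 delta : R, 0 < delta &
    forall s', Sset s' -> D s.1 s'.1 + dM M s.2 s'.2 < delta ->
      `|transfer_risk C EO D PXT TXs TYs s - transfer_risk C EO D PXT TXs TYs s'| < eps.
Proof.
move=> [mu f] Ss eps eps_gt0; have [/= mu_prob Af] := Sset_sub _ Ss.
set k := LC * (L' * `|L| + 1).
have k_gt0 : 0 < k by rewrite mulr_gt0 // ltr_pwDr // mulr_ge0 // ltW.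
have L1_gt0 : 0 < `|L| + 1 by rewrite ltr_pwDr.
(* delta keeps d_M below the cap M, |L| d_M below 1, and k d_S below eps *)
exists (Order.min (Order.min M (`|L| + 1)^-1) (eps / k)).
  by rewrite !lt_min M_gt0 invr_gt0 L1_gt0 divr_gt0.
move=> [mu' f'] Ss' /=; have [/= mu'_prob Af'] := Sset_sub _ Ss'.
have dM0 := dM_ge0 f f' M_gt0; have D0 := D_ge0 _ _ mu_prob mu'_prob.
rewrite !lt_min => /andP[/andP[dS_ltM dS_ltL] dS_lteps].
have dM_ltM : dM M f f' < M by apply: le_lt_trans dS_ltM; rewrite lerDr.
have Ld_le1 : `|L| * dM M f f' <= 1.
  have dM_le : dM M f f' <= (`|L| + 1)^-1.
    by apply/ltW/(le_lt_trans _ dS_ltL); rewrite lerDr.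
  apply: (@le_trans _ _ ((`|L| + 1) * dM M f f')); first by rewrite ler_wpM2r // lerDl.
  by rewrite -[leRHS](mulfV (lt0r_neq0 L1_gt0)) ler_wpM2l // ltW.
apply: le_lt_trans (transfer_risk_lipschitz PXT TXs TYs AS AT D EO C LC L L' p
  mTX mTY mAS fST_AT D_ge0 D_sym D_tri EO_ge0 C_ge0 LC_gt0 C_lip TY_lip L'_gt0
  p_ge1 EO_W M_gt0 mu_prob mu'_prob Af Af' dM_ltM Ld_le1) _.
by rewrite -ltr_pdivlMl // mulrC.
Qed.
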